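(* In the setting described in the context, the left kernel of $\mathbf G$ has dimension equal to the number of vertices of the mesh: $$\dim\ker(\mathbf G^T)=|\mathring{\mathcal V}|+|\mathcal V_\partial|=|\mathcal V|,$$ and a basis of $\ker(\mathbf G^T)$ can be constructed consisting of one vector associated with each vertex of the mesh.
   Context: $\Omega\subset\mathbb{R}^2$ is a bounded, connected, open polygonal domain (possibly with holes) and $\mathcal T$ a conforming triangulation of $\Omega$ with edges $\mathcal E$ and vertices $\mathcal V$, each triangle having at most one edge on $\partial\Omega$. $\mathring{\mathcal E}$ is the set of internal edges (shared by two triangles), $\mathring{\mathcal V}$ the set of internal vertices and $\mathcal V_\partial$ the set of boundary vertices. Every edge is oriented (from $A=(x_A,y_A)$ to $B=(x_B,y_B)$) and all triangles have the same rotation sense; $\delta_T^\Gamma=+1$ if the orientation of the edge $\Gamma\subset\partial T$ agrees with that of $\partial T$, $-1$ otherwise. $\boldsymbol{\Delta}$ is the $|\mathcal T|\times|\mathring{\mathcal E}|$ matrix with entry $\delta_T^\Gamma$ if $\Gamma\in\mathring{\mathcal E}$ is an edge of $T$ and $0$ otherwise. For each internal edge, $a_\Gamma=y_B-y_A$, $b_\Gamma=x_A-x_B$, $c_\Gamma=x_By_A-y_Bx_A$, and $\mathbf a,\mathbf b,\mathbf c$ are the corresponding diagonal $|\mathring{\mathcal E}|\times|\mathring{\mathcal E}|$ matrices. $\mathbf G$ is the $(3|\mathcal T|+|\mathring{\mathcal E}|)\times 3|\mathring{\mathcal E}|$ matrix $$\mathbf G=\begin{pmatrix}\boldsymbol{\Delta}&0&0\\0&\boldsymbol{\Delta}&0\\0&0&\boldsymbol{\Delta}\\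 \mathbf c&\mathbf a&\mathbf b\end{pmatrix}.$$ *)

From HB Require Import structures.
From mathcomp Require Import all_boot all_order all_algebra.
From mathcomp Require Import boolp classical_sets reals topology normedtype.
Set Implicit Arguments. Unset Strict Implicit. Unset Printing Implicit Defensive.
Import Order.TTheory GRing.Theory Num.Theory.
Local Open Scope ring_scope.
Local Open Scope classical_set_scope.
Import numFieldNormedType.Exports.

(* A mesh is given by
   - a finite type V of vertices with positions p : V -> R * R,
   - a finite type T of triangles, triangle t having vertices tv t 0, tv t 1,
     tv t 2 listed in its rotation sense (boundary of t traversed
     tv t 0 -> tv t 1 -> tv t 2 -> tv t 0),
   - a finite type E of oriented edges, edge e going from src e (= A) to
     dst e (= B). *)
Section Mesh.
Variables (R : realType) (V T E : finType) (p : V -> R * R)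
  (tv : T -> 'I_3 -> V) (src dst : E -> V).

Definition tvset (t : T) : {set V} := [set tv t i | i : 'I_3]%SET.
Definition evset (e : E) : {set V} := [set src e; dst e]%SET.

Definition conv (S : {set V}) : set (R * R) :=
  [set x | exists w : V -> R, (forall v, 0 <= w v) /\
     (forall v, v \notin S -> w v = 0) /\ \sum_v w v = 1 /\
     x = (\sum_v w v * (p v).1, \sum_v w v * (p v).2)].

Definition closed_tri (t : T) : set (R * R) := conv (tvset t).
Definition segment (e : E) : set (R * R) := conv (evset e).

Definition Omega : set (R * R) := interior [set x | exists t, closed_tri t x].
Definition bdry : set (R * R) := closure Omega `\` Omega.

(* twice the signed area of triangle t *)
Definition tri_det (t : T) : R :=
  let a := p (tv t ord0) in let b := p (tv t (ordS ord0)) in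
  let c := p (tv t (ordS (ordS ord0))) in
  (b.1 - a.1) * (c.2 - a.2) - (b.2 - a.2) * (c.1 - a.1).

Definition pos_side (t : T) (e : E) : bool :=
  [exists i : 'I_3, (src e == tv t i) && (dst e == tv t (ordS i))].
Definition neg_side (t : T) (e : E) : bool :=
  [exists i : 'I_3, (dst e == tv t i) && (src e == tv t (ordS i))].
Definition side (t : T) (e : E) : bool := pos_side t e || neg_side t e.

Definition delta (t : T) (e : E) : R :=
  if pos_side t e then 1 else if neg_side t e then -1 else 0.

Definition internal (e : E) : bool := (#|[set t | side t e]%SET| == 2)%N.
Definition Eint : finType := {e : E | internal e}.

Definition a_coef (e : E) : R := (p (dst e)).2 - (p (src e)).2.
Definition b_coef (e : E) : R := (p (src e)).1 - (p (dst e)).1.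
Definition c_coef (e : E) : R :=
  (p (dst e)).1 * (p (src e)).2 - (p (dst e)).2 * (p (src e)).1.

Definition RowI : finType := (T + T + T + Eint)%type.
Definition ColI : finType := (Eint + Eint + Eint)%type.

Definition Gfun (r : RowI) (c : ColI) : R :=
  match r, c with
  | inl (inl (inl t)), inl (inl e) => delta t (val e)
  | inl (inl (inr t)), inl (inr e) => delta t (val e)
  | inl (inr t), inr e => delta t (val e)
  | inr f, inl (inl e) => if f == e then c_coef (val e) else 0
  | inr f, inl (inr e) => if f == e then a_coef (val e) else 0
  | inr f, inr e => if f == e then b_coef (val e) else 0
  | _, _ => 0
  end.

Definition Gmx : 'M[R]_(#|{: RowI}|, #|{: ColI}|) :=
  \matrix_(i, j) Gfun (enum_val i) (enum_val j).

Definition same_rotation_sense : Prop :=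
  (forall t, 0 < tri_det t) \/ (forall t, tri_det t < 0).

(* conformity: two distinct closed triangles meet in the empty set, a common
   vertex or a common edge *)
Definition conforming : Prop :=
  forall t t', t != t' ->
    (#|tvset t :&: tvset t'| <= 2)%N /\
    closed_tri t `&` closed_tri t' = conv (tvset t :&: tvset t').

Definition mesh_vertices : Prop := forall v, exists t, v \in tvset t.
Definition mesh_edges : Prop :=
  (forall e, exists t, side t e) /\
  (forall t (i : 'I_3), exists e, evset e = [set tv t i; tv t (ordS i)]%SET) /\
  (forall e e', evset e = evset e' -> e = e').

(* Omega is connected (it is open and bounded by construction) *)
Definition domain_connected : Prop := connected Omega.

(* polygonal domain (possibly with holes): the boundary is a disjoint union of
   simple closed polygons, i.e. every mesh vertex lying on the boundary is the
   endpoint of exactly two edges lying on the boundary *)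
Definition polygonal_boundary : Prop :=
  forall v, bdry (p v) ->
    exists e1 e2, e1 != e2 /\ v \in evset e1 /\ v \in evset e2 /\
      segment e1 `<=` bdry /\ segment e2 `<=` bdry /\
      (forall e, v \in evset e -> segment e `<=` bdry -> e = e1 \/ e = e2).

Definition one_bdry_edge : Prop :=
  forall t e1 e2, side t e1 -> side t e2 ->
    segment e1 `<=` bdry -> segment e2 `<=` bdry -> e1 = e2.

Definition int_vertices : {set V} := [set v | `[< Omega (p v) >]]%SET.
Definition bdry_vertices : {set V} := [set v | `[< bdry (p v) >]]%SET.

End Mesh.

From Pilot Require Import Defs.
From HB Require Import structures.
From mathcomp Require Import all_boot all_order all_algebra.
From mathcomp Require Import boolp classical_sets reals topology normedtype.
From mathcomp Require Import ring lra.
Import Order.TTheory GRing.Theory Num.Theory.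
Import numFieldNormedType.Exports.
Local Open Scope ring_scope.
Set Implicit Arguments. Unset Strict Implicit. Unset Printing Implicit Defensive.

(* A row vector (X, Y, Z, W) of ker G^T assigns to each triangle T the affine
   function X_T + Y_T x + Z_T y, and the three equations of an internal edge say
   that the jump of these functions across the edge is W times the equation of
   the edge line, i.e. that the jump vanishes at both endpoints of the edge
   (W is then determined). So ker G^T is the space of piecewise affine functions
   that agree at every vertex along the internal edges through it.  Around a
   vertex v the triangles are connected through such edges: by conformity and
   the common orientation their angular sectors at v do not overlap, so a class
   of them closed under crossing internal edges either covers every direction or
   is bounded by two boundary edges at v, and splitting the star of v into two
   classes would produce three boundary edges at v, whereas the boundary is a
   union of polygons.  The functions of the kernel are therefore determined by
   their vertex values, and the hat functions form a basis. *)

Lemma ord3_orbit (i k : 'I_3) : k = i \/ k = ordS i \/ k = ordS (ordS i).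
Proof.
by case: i k => [[|[|[|?]]] ?] [[|[|[|?]]] ?] //;
  [left | right; left | right; right | right; right | left | right; left
  | right; left | right; right | left]; apply/val_inj.
Qed.

Lemma ordS3K (i : 'I_3) : ordS (ordS (ordS i)) = i.
Proof. by apply/val_inj; case: i => [[|[|[|?]]] ?]. Qed.

Lemma ordS_eqF (i : 'I_3) : (ordS i == i) = false.
Proof. by case: i => [[|[|[|?]]] ?]. Qed.

Lemma ordS2_eqF (i : 'I_3) : (ordS (ordS i) == i) = false.
Proof. by case: i => [[|[|[|?]]] ?]. Qed.

Lemma ordS_S2_eqF (i : 'I_3) : (ordS i == ordS (ordS i)) = false.
Proof. by rewrite (inj_eq (@ordS_inj 3)) eq_sym ordS_eqF. Qed.

Definition ord3_eqF (i : 'I_3) :=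
  (ordS_eqF i, ordS2_eqF i, ordS_S2_eqF i,
   etrans (eq_sym _ _) (ordS_eqF i), etrans (eq_sym _ _) (ordS2_eqF i),
   etrans (eq_sym _ _) (ordS_S2_eqF i)).

Lemma sum_ord3 (M : nmodType) (F : 'I_3 -> M) (i : 'I_3) :
  \sum_j F j = F i + F (ordS i) + F (ordS (ordS i)).
Proof.
have sum0 : \sum_j F j = F ord0 + F (ordS ord0) + F (ordS (ordS ord0)).
  rewrite !big_ord_recl big_ord0 addr0 addrA.
  by congr (_ + F _ + F _); apply/val_inj.
case: (ord3_orbit ord0 i) => [->|[->|->]] //; rewrite sum0 ?ordS3K.
  by rewrite -addrA addrC.
by rewrite addrC addrA.
Qed.

Lemma sum_indicator (I : finType) (R : pzSemiRingType) (F : I -> R) (a : I) :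
  \sum_i (a == i)%:R * F i = F a.
Proof.
rewrite (bigD1 a) //= eqxx mul1r big1 ?addr0 // => i /negPf.
by rewrite eq_sym => ->; rewrite mul0r.
Qed.

Lemma sum_mul_if_eq (I : finType) (R : pzSemiRingType) (F : I -> R) (a : I) (c : R) :
  \sum_i F i * (if i == a then c else 0) = F a * c.
Proof. by rewrite (bigD1 a) //= eqxx big1 ?addr0 // => i /negPf ->; rewrite mulr0. Qed.

Section PlaneAlgebra.
Variable R : comPzRingType.
Implicit Types a b c x y d : R * R.

Definition aff (c0 c1 c2 : R) x : R := c0 + c1 * x.1 + c2 * x.2.
Definition area2 a b c : R := (b.1 - a.1) * (c.2 - a.2) - (b.2 - a.2) * (c.1 - a.1).
Definition cross a b : R := a.1 * b.2 - a.2 * b.1.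
Definition dot a b : R := a.1 * b.1 + a.2 * b.2.
Definition vsub a b : R * R := (a.1 - b.1, a.2 - b.2).
Definition shift x d (s : R) : R * R := (x.1 + s * d.1, x.2 + s * d.2).

Lemma area2_rot a b c : area2 b c a = area2 a b c.
Proof. rewrite /area2; ring. Qed.

Lemma area2_aac a c : area2 a a c = 0.
Proof. rewrite /area2; ring. Qed.

Lemma area2_aba a b : area2 a b a = 0.
Proof. rewrite /area2; ring. Qed.

Lemma area2_split a b c x : area2 x b c + area2 x c a + area2 x a b = area2 a b c.
Proof. rewrite /area2; ring. Qed.

Lemma area2_split_x a b c x :
  area2 x b c * a.1 + area2 x c a * b.1 + area2 x a b * c.1 = x.1 * area2 a b c.
Proof. rewrite /area2; ring. Qed.

Lemma area2_split_y a b c x :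
  area2 x b c * a.2 + area2 x c a * b.2 + area2 x a b * c.2 = x.2 * area2 a b c.
Proof. rewrite /area2; ring. Qed.

Lemma area2_shift_l a b d s : area2 (shift a d s) b a = s * cross d (vsub b a).
Proof. rewrite /area2 /cross /vsub /=; ring. Qed.

Lemma area2_shift_r a b d s : area2 (shift a d s) a b = s * cross (vsub b a) d.
Proof. rewrite /area2 /cross /vsub /=; ring. Qed.

(* [aff (line_c a b) (line_a a b) (line_b a b)] is the equation of the line
   [ab]; for an edge these are [c_coef], [a_coef], [b_coef] of its endpoints. *)
Definition line_a a b : R := b.2 - a.2.
Definition line_b a b : R := a.1 - b.1.
Definition line_c a b : R := b.1 * a.2 - b.2 * a.1.

Lemma aff_line_eq0 (l : R) a b :
  aff (l * line_c a b) (l * line_a a b) (l * line_b a b) a = 0 /\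
  aff (l * line_c a b) (l * line_a a b) (l * line_b a b) b = 0.
Proof. by rewrite /aff /line_a /line_b /line_c; split; ring. Qed.

Lemma aff_sub (c0 c1 c2 d0 d1 d2 : R) x :
  aff c0 c1 c2 x - aff d0 d1 d2 x = aff (c0 - d0) (c1 - d1) (c2 - d2) x.
Proof. rewrite /aff; ring. Qed.

Lemma area2_vsub a b c : area2 a b c = cross (vsub b a) (vsub c a).
Proof. by []. Qed.

Lemma cross_anti a b : cross a b = - cross b a.
Proof. rewrite /cross; ring. Qed.

End PlaneAlgebra.

Lemma exists_small_weight (R : realFieldType) (g1 g2 : R) : exists s : R,
  [/\ 0 < s, s <= 1 / 2, 0 <= (1 - s) / 2 + s * g1 & 0 <= (1 - s) / 2 + s * g2].
Proof.
pose s := 1 / (2 + 2 * `|g1| + 2 * `|g2|); exists s.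
have n1 := normr_ge0 g1; have n2 := normr_ge0 g2.
have m0 : 0 < 2 + 2 * `|g1| + 2 * `|g2| by lra.
have sm : s * (2 + 2 * `|g1| + 2 * `|g2|) = 1 by rewrite /s mul1r mulVf // gt_eqF.
have s0 : 0 < s by rewrite /s divr_gt0.
have a1 : - g1 <= `|g1| by rewrite -normrN ler_norm.
have a2 : - g2 <= `|g2| by rewrite -normrN ler_norm.
by split=> //; nra.
Qed.

Lemma eq_set2 (U : finType) (x y a b : U) : [set x; y] = [set a; b] -> a != b ->
  (x = a /\ y = b) \/ (x = b /\ y = a).
Proof.
move=> xy_ab ab.
have : a \in [set x; y] by rewrite xy_ab set21.
have : b \in [set x; y] by rewrite xy_ab set22.
have : x \in [set a; b] by rewrite -xy_ab set21.
have : y \in [set a; b] by rewrite -xy_ab set22.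
rewrite !inE => /orP[]/eqP-> /orP[]/eqP-> /orP[]/eqP hb /orP[]/eqP ha; subst;
  by [left | right | move: ab; rewrite eqxx].
Qed.

Lemma sqr_add_eq0 (R : realDomainType) (x y : R) : x ^+ 2 + y ^+ 2 = 0 -> x = 0 /\ y = 0.
Proof.
move=> h; have hx := sqr_ge0 x; have hy := sqr_ge0 y.
by split; apply/eqP; rewrite -sqrf_eq0; apply/eqP; lra.
Qed.

Lemma aff_eq0_line (R : fieldType) (c0 c1 c2 : R) (a b : R * R) :
  line_a a b ^+ 2 + line_b a b ^+ 2 != 0 -> aff c0 c1 c2 a = 0 -> aff c0 c1 c2 b = 0 ->
  let l := (c1 * line_a a b + c2 * line_b a b) / (line_a a b ^+ 2 + line_b a b ^+ 2) in
  [/\ c0 = l * line_c a b, c1 = l * line_a a b & c2 = l * line_b a b].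
Proof.
move=> n0 fa fb l; rewrite /l; rewrite /aff /line_a /line_b /line_c in n0 fa fb *.
have key : c1 * (b.1 - a.1) + c2 * (b.2 - a.2) = 0.
  by rewrite -[RHS](subrr 0) -{1}fb -fa; ring.
have c0E : c0 = - (c1 * a.1 + c2 * a.2) by rewrite -[RHS]add0r -fa; ring.
set n := (b.2 - a.2) ^+ 2 + _ in n0 *; set L := _ / n.
have E1 : c1 = L * (b.2 - a.2).
  apply: (mulIf n0); rewrite mulrAC divfK //; apply/eqP; rewrite -subr_eq0; apply/eqP.
  by rewrite /n; transitivity ((b.1 - a.1) * (c1 * (b.1 - a.1) + c2 * (b.2 - a.2)));
    [ring | rewrite key mulr0].
have E2 : c2 = L * (a.1 - b.1).
  apply: (mulIf n0); rewrite mulrAC divfK //; apply/eqP; rewrite -subr_eq0; apply/eqP.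
  by rewrite /n; transitivity ((b.2 - a.2) * (c1 * (b.1 - a.1) + c2 * (b.2 - a.2)));
    [ring | rewrite key mulr0].
by split=> //; rewrite c0E E1 E2; ring.
Qed.

Lemma line_norm_neq0 (R : realDomainType) (a b : R * R) :
  a != b -> line_a a b ^+ 2 + line_b a b ^+ 2 != 0.
Proof.
apply: contraNneq => /sqr_add_eq0 []; rewrite /line_a /line_b => h2 h1; apply/eqP.
by rewrite [a]surjective_pairing [b]surjective_pairing; congr (_, _); lra.
Qed.

Lemma div_sign (R : realFieldType) (sg x y : R) : 0 < sg * y -> x / y = (sg * x) / (sg * y).
Proof.
move=> hy; have sg0 : sg != 0 by apply: contraTneq hy => ->; rewrite mul0r ltxx.
by rewrite invfM mulrACA divff // mul1r.
Qed.

(* [dot d n / cross d n] is the cotangent of the angle from [d] to [n]: it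
   decreases strictly when [n] turns further away from [d] in the sense [sg]. *)
Lemma cot_lt (R : realFieldType) (sg : R) (d o n : R * R) :
  0 < d.1 ^+ 2 + d.2 ^+ 2 -> 0 < sg * cross o n -> 0 < cross d o * cross d n ->
  sg * (dot d n / cross d n) < sg * (dot d o / cross d o).
Proof.
move=> d0 on don.
have o0 : cross d o != 0 by apply: contraTneq don => ->; rewrite mul0r ltxx.
have n0 : cross d n != 0 by apply: contraTneq don => ->; rewrite mulr0 ltxx.
rewrite -subr_gt0.
have -> : sg * (dot d o / cross d o) - sg * (dot d n / cross d n)
    = sg * cross o n * (d.1 ^+ 2 + d.2 ^+ 2) / (cross d o * cross d n).
  by rewrite /dot /cross in o0 n0 *; field; apply/andP.
by rewrite divr_gt0 // mulr_gt0.
Qed.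

Lemma no_strict_ascent (R : realDomainType) (U : finType) (S : {set U}) (F : U -> R) u0 :
  u0 \in S -> (forall u, u \in S -> exists2 u', u' \in S & F u < F u') -> False.
Proof.
move=> u0S up; case: (@Order.TotalTheory.arg_maxP _ _ U u0 (mem S) F u0S) => u uS umax.
have [u' u'S lt_uu'] := up u uS.
by move: (umax u' u'S) => /=; rewrite leNgt lt_uu'.
Qed.

Lemma uniform_small (R : realDomainType) (U : finType) (Q : U -> R -> Prop) :
  (forall u, exists2 e, 0 < e & forall s, 0 < s -> s <= e -> Q u s) ->
  exists2 e, 0 < e & forall u s, 0 < s -> s <= e -> Q u s.
Proof.
move=> H.
suff [e e0 He] : exists2 e, 0 < e & forall u s, u \in enum U -> 0 < s -> s <= e -> Q u s.
  by exists e => // u s; apply: He; rewrite mem_enum.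
elim: (enum U) => [|u l [e2 e20 IH]]; first by exists 1.
have [e1 e10 H1] := H u.
exists (Num.min e1 e2); first by rewrite lt_min e10 e20.
move=> u' s; rewrite in_cons le_min => /orP[/eqP ->|ul] s0 /andP[h1 h2].
  exact: H1.
exact: IH.
Qed.

Lemma ball_shift (R : realType) (x d : R * R) (eps : R) : 0 < eps ->
  exists2 e, 0 < e & forall s, 0 < s -> s <= e -> ball x eps (shift x d s).
Proof.
move=> eps0; pose K := 1 + `|d.1| + `|d.2|.
have n1 := normr_ge0 d.1; have n2 := normr_ge0 d.2.
have K0 : 0 < K by rewrite /K; lra.
exists (eps / (2 * K)); first by apply: divr_gt0 => //; apply: mulr_gt0.
move=> s s0 se.
have sK : s * K <= eps / 2.
  have : s * (2 * K) <= eps by rewrite -ler_pdivlMr //; apply: mulr_gt0.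
  lra.
have s1 : s * `|d.1| <= s * K by apply: ler_wpM2l; [apply: ltW | rewrite /K; lra].
have s2 : s * `|d.2| <= s * K by apply: ler_wpM2l; [apply: ltW | rewrite /K; lra].
by split; rewrite /= -ball_normE /= opprD addNKr normrN normrM gtr0_norm //; lra.
Qed.

Section Mesh.
Variables (R : realType) (V T E : finType) (p : V -> R * R)
  (tv : T -> 'I_3 -> V) (src dst : E -> V).

Local Notation P t i := (p (tv t i)).
Local Notation D t := (tri_det p tv t).

Lemma area2_tv t i : area2 (P t i) (P t (ordS i)) (P t (ordS (ordS i))) = D t.
Proof.
case: (ord3_orbit ord0 i) => [->|[->|->]]; rewrite ?ordS3K //.
  by rewrite area2_rot.
by rewrite -area2_rot.
Qed.

Hypothesis tri_det_neq0 : forall t, D t != 0.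

Definition bary t i x : R := area2 x (P t (ordS i)) (P t (ordS (ordS i))) / D t.

Definition bary0 t i : R := cross (P t (ordS i)) (P t (ordS (ordS i))) / D t.
Definition bary1 t i : R := ((P t (ordS i)).2 - (P t (ordS (ordS i))).2) / D t.
Definition bary2 t i : R := ((P t (ordS (ordS i))).1 - (P t (ordS i)).1) / D t.

Lemma baryE t i x : bary t i x = aff (bary0 t i) (bary1 t i) (bary2 t i) x.
Proof. rewrite /bary /aff /bary0 /bary1 /bary2 /area2 /cross; ring. Qed.

Lemma bary_shift t i x d s :
  bary t i (shift x d s) = bary t i x + s * (bary1 t i * d.1 + bary2 t i * d.2).
Proof. rewrite !baryE /aff /=; ring. Qed.

Lemma bary_vsub t i x y :
  bary1 t i * (vsub y x).1 + bary2 t i * (vsub y x).2 = bary t i y - bary t i x.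
Proof. rewrite !baryE /aff /=; ring. Qed.

Lemma bary_segment t i x y s :
  bary t i (shift x (vsub y x) s) = (1 - s) * bary t i x + s * bary t i y.
Proof. rewrite bary_shift bary_vsub; ring. Qed.

Lemma bary_vertex t i j : bary t i (P t j) = (i == j)%:R.
Proof.
rewrite /bary; case: (ord3_orbit i j) => [->|[->|->]].
- by rewrite area2_tv eqxx divff.
- by rewrite ord3_eqF area2_aac mul0r.
- by rewrite ord3_eqF area2_aba mul0r.
Qed.

Lemma pos_tv_inj t : injective (fun i => P t i).
Proof.
move=> i j /= Pij; have := bary_vertex t i j; rewrite -Pij bary_vertex eqxx.
by case: eqP => // _ /eqP; rewrite oner_eq0.
Qed.

Lemma tv_inj t : injective (tv t).
Proof. by move=> i j tij; apply: (@pos_tv_inj t); rewrite /= tij. Qed.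

Lemma tv_neq t i j : i != j -> tv t i != tv t j.
Proof. by apply: contra => /eqP /tv_inj ->. Qed.

Lemma card_tvset t : #|tvset tv t| = 3.
Proof. by rewrite card_imset ?card_ord //; apply: tv_inj. Qed.

Lemma tv_in t i : tv t i \in tvset tv t.
Proof. exact: imset_f. Qed.

Lemma tvsetP t i v : v \in tvset tv t ->
  v = tv t i \/ v = tv t (ordS i) \/ v = tv t (ordS (ordS i)).
Proof. by move=> /imsetP [k _ ->]; case: (ord3_orbit i k) => [->|[->|->]]; tauto. Qed.

Lemma bary_sum t x : \sum_i bary t i x = 1.
Proof.
rewrite (sum_ord3 _ ord0) /bary ordS3K -!mulrDl [X in X / _]area2_split.
by rewrite area2_tv divff.
Qed.

Lemma bary_sum_x t x : \sum_i bary t i x * (P t i).1 = x.1.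
Proof.
rewrite (sum_ord3 _ ord0) /bary ordS3K !(mulrAC _ (D t)^-1) -!mulrDl.
by rewrite area2_split_x area2_tv mulfK.
Qed.

Lemma bary_sum_y t x : \sum_i bary t i x * (P t i).2 = x.2.
Proof.
rewrite (sum_ord3 _ ord0) /bary ordS3K !(mulrAC _ (D t)^-1) -!mulrDl.
by rewrite area2_split_y area2_tv mulfK.
Qed.

Definition bary_comb (w : 'I_3 -> R) (Q : 'I_3 -> R * R) : R * R :=
  (\sum_j w j * (Q j).1, \sum_j w j * (Q j).2).

Lemma bary_comb_affine t i w Q : \sum_j w j = 1 ->
  bary t i (bary_comb w Q) = \sum_j w j * bary t i (Q j).
Proof.
move=> w1; rewrite baryE /aff /= !mulr_sumr -[bary0 t i]mulr1 -w1 mulr_sumr.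
by rewrite -!big_split /=; apply: eq_bigr => j _; rewrite baryE /aff; ring.
Qed.

Lemma bary_comb_tv t i w : \sum_j w j = 1 -> bary t i (bary_comb w (fun j => P t j)) = w i.
Proof.
move=> w1; rewrite bary_comb_affine // -(sum_indicator w i).
by apply: eq_bigr => j _; rewrite bary_vertex mulrC.
Qed.

Lemma aff_eq0_tri t c0 c1 c2 : (forall j, aff c0 c1 c2 (P t j) = 0) ->
  [/\ c0 = 0, c1 = 0 & c2 = 0].
Proof.
move=> H.
have Hid x : aff c0 c1 c2 x = 0.
  have <- : \sum_i aff c0 c1 c2 (P t i) * bary t i x = aff c0 c1 c2 x.
    rewrite /aff (eq_bigr (fun i => c0 * bary t i x + c1 * (bary t i x * (P t i).1)
       + c2 * (bary t i x * (P t i).2))); last by move=> i _; ring.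
    by rewrite !big_split /= -!mulr_sumr bary_sum bary_sum_x bary_sum_y mulr1.
  by rewrite big1 // => i _; rewrite H mul0r.
have := Hid (0, 0); have := Hid (1, 0); have := Hid (0, 1); rewrite /aff /=.
by split; lra.
Qed.

Lemma sum_tvset t (w F : V -> R) : (forall v, v \notin tvset tv t -> w v = 0) ->
  \sum_v w v * F v = \sum_i w (tv t i) * F (tv t i).
Proof.
move=> w0; rewrite (bigID (mem (tvset tv t))) /= [X in _ + X]big1 ?addr0; last first.
  by move=> v /w0 ->; rewrite mul0r.
by rewrite big_imset //= => i j _ _; apply: tv_inj.
Qed.

Lemma conv_bary t (S : {set V}) x : S \subset tvset tv t -> conv p S x ->
  forall i, 0 <= bary t i x /\ (tv t i \notin S -> bary t i x = 0).
Proof.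
move=> HS [w [w_ge0 [wS [w1 ->]]]].
have wT v : v \notin tvset tv t -> w v = 0.
  by move=> Hv; apply: wS (contraNN (fintype.subsetP HS v) Hv).
have -> : \sum_v w v * (p v).1 = \sum_i w (tv t i) * (P t i).1 by apply: sum_tvset.
have -> : \sum_v w v * (p v).2 = \sum_i w (tv t i) * (P t i).2 by apply: sum_tvset.
have w1' : \sum_i w (tv t i) = 1.
  rewrite -w1 -(eq_bigr _ (fun v _ => mulr1 (w v))) (sum_tvset (fun=> 1) wT).
  by apply: eq_bigr => i _; rewrite mulr1.
by move=> i; rewrite (bary_comb_tv _ _ w1'); split => //; apply: wS.
Qed.

Lemma closed_triP t x : closed_tri p tv t x <-> forall i, 0 <= bary t i x.
Proof.
split=> [H i|H]; first by case: (conv_bary (subxx _) H i).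
pose w v := \sum_i (tv t i == v)%:R * bary t i x.
have sum_w (F : V -> R) : \sum_v w v * F v = \sum_i bary t i x * F (tv t i).
  rewrite (eq_bigr (fun v => \sum_i (tv t i == v)%:R * (bary t i x * F v))); last first.
    by move=> v _; rewrite mulr_suml; apply: eq_bigr => i _; rewrite mulrA.
  by rewrite exchange_big; apply: eq_bigr => i _; rewrite sum_indicator.
exists w; split.
  by move=> v; apply: sumr_ge0 => i _; apply: mulr_ge0.
split.
  move=> v Hv; apply: big1 => i _; case: eqP => [HE|_]; last by rewrite mul0r.
  by move: Hv; rewrite -HE tv_in.
split.
  by rewrite -(eq_bigr _ (fun v _ => mulr1 (w v))) sum_w -[RHS](bary_sum t x);
    apply: eq_bigr => i _; rewrite mulr1.
by rewrite !sum_w bary_sum_x bary_sum_y -surjective_pairing.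
Qed.


Variable sg : R.
Hypothesis sg_tri_det : forall t, 0 < sg * D t.
Hypothesis Hconf : conforming p tv.

Lemma tvset_sub_inter t1 t2 : t1 != t2 -> ~ tvset tv t1 \subset tvset tv t1 :&: tvset tv t2.
Proof.
move=> t12 /subset_leq_card; rewrite card_tvset => H3.
by case: (Hconf t12) => /(leq_trans H3).
Qed.

(* A point near the side, pushed slightly towards the third vertex of [t1], lies
   in [t2] too (the common orientation puts that vertex on the side of [t2]), but
   it is not a convex combination of common vertices. *)
Lemma eq_tri_of_oriented_side t1 t2 i j :
  tv t1 i = tv t2 j -> tv t1 (ordS i) = tv t2 (ordS j) -> t1 = t2.
Proof.
move=> HA HB; case: (eqVneq t1 t2) => // t12; exfalso.
have third_notin : tv t1 (ordS (ordS i)) \notin tvset tv t1 :&: tvset tv t2.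
  apply/negP => Hin; apply: (tvset_sub_inter t12); apply/fintype.subsetP => v.
  by case/(tvsetP i) => [->|[->|->]] //; rewrite inE tv_in /= ?HA ?HB tv_in.
pose C := P t1 (ordS (ordS i)).
have [s [s0 s_le n1 n2]] := exists_small_weight (bary t2 j C) (bary t2 (ordS j) C).
pose w (k : 'I_3) := if k == ordS (ordS i) then s else (1 - s) / 2.
have w1 : \sum_k w k = 1 by rewrite (sum_ord3 _ i) /w eqxx !ord3_eqF; lra.
pose y := bary_comb w (fun k => P t1 k).
have in_t2 : closed_tri p tv t2 y.
  apply/closed_triP => k; rewrite bary_comb_affine // (sum_ord3 _ i) /w eqxx !ord3_eqF.
  rewrite HA HB !bary_vertex.
  have C_pos : 0 < bary t2 (ordS (ordS j)) C.
    rewrite /bary !ordS3K /C -HA -HB -area2_rot area2_tv (div_sign _ (sg_tri_det t2)).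
    by rewrite divr_gt0.
  case: (ord3_orbit j k) => [->|[->|->]]; rewrite ?eqxx !ord3_eqF /= ?mulr1 ?mulr0 ?addr0 ?add0r //.
  by have := mulr_gt0 s0 C_pos; lra.
have in_t1 : closed_tri p tv t1 y.
  by apply/closed_triP => k; rewrite bary_comb_tv // /w; case: ifP => _; lra.
have in_common : conv p (tvset tv t1 :&: tvset tv t2) y.
  by case: (Hconf t12) => _ <-; split.
have [_ /(_ third_notin)] := conv_bary (subsetIl _ _) in_common (ordS (ordS i)).
by rewrite bary_comb_tv // /w eqxx => s_eq0; move: s0; rewrite s_eq0 ltxx.
Qed.

Local Notation side := (side tv src dst).
Local Notation pos_side := (pos_side tv src dst).
Local Notation neg_side := (neg_side tv src dst).
Local Notation internal := (internal tv src dst).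
Local Notation evset := (evset src dst).
Local Notation delta := (delta R tv src dst).
Local Notation sides e := [set t | side t e].

Lemma pos_sideP t e :
  reflect (exists k, src e = tv t k /\ dst e = tv t (ordS k)) (pos_side t e).
Proof.
apply: (iffP existsP) => [[k /andP[/eqP h1 /eqP h2]]|[k [h1 h2]]]; exists k => //.
by rewrite h1 h2 !eqxx.
Qed.

Lemma neg_sideP t e :
  reflect (exists k, dst e = tv t k /\ src e = tv t (ordS k)) (neg_side t e).
Proof.
apply: (iffP existsP) => [[k /andP[/eqP h1 /eqP h2]]|[k [h1 h2]]]; exists k => //.
by rewrite h1 h2 !eqxx.
Qed.

Lemma pos_neg_sideF t e : pos_side t e -> neg_side t e -> False.
Proof.
move=> /pos_sideP [k [h1 h2]] /neg_sideP [m [h3 h4]].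
have km : k = ordS m by apply: (@tv_inj t); rewrite -h1 h4.
have Skm : ordS k = m by apply: (@tv_inj t); rewrite -h2 h3.
by move: (ordS2_eqF m); rewrite -km Skm eqxx.
Qed.

Lemma delta_pos t e : pos_side t e -> delta t e = 1.
Proof. by rewrite /Defs.delta => ->. Qed.

Lemma delta_neg t e : neg_side t e -> delta t e = -1.
Proof.
move=> hn; rewrite /Defs.delta hn; case: ifP => // hp.
by case: (pos_neg_sideF hp hn).
Qed.

Lemma delta_out t e : ~~ side t e -> delta t e = 0.
Proof. by rewrite negb_or => /andP[/negPf h1 /negPf h2]; rewrite /Defs.delta h1 h2. Qed.

Lemma pos_side_inj t1 t2 e : pos_side t1 e -> pos_side t2 e -> t1 = t2.
Proof.
move=> /pos_sideP [k [h1 h2]] /pos_sideP [m [h3 h4]].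
by apply: (eq_tri_of_oriented_side (i := k) (j := m)); rewrite -?h1 -?h2.
Qed.

Lemma neg_side_inj t1 t2 e : neg_side t1 e -> neg_side t2 e -> t1 = t2.
Proof.
move=> /neg_sideP [k [h1 h2]] /neg_sideP [m [h3 h4]].
by apply: (eq_tri_of_oriented_side (i := k) (j := m)); rewrite -?h1 -?h2.
Qed.

Lemma side_inj_pos t1 t2 e : side t1 e -> side t2 e ->
  pos_side t1 e = pos_side t2 e -> t1 = t2.
Proof.
case/orP=> h1 /orP[] h2; rewrite ?h1 ?h2.
- by move=> _; apply: pos_side_inj h1 h2.
- by case: (boolP (pos_side t2 e)) => // h3 _; apply: pos_side_inj h1 h3.
- by case: (boolP (pos_side t1 e)) => // h3 _; apply: pos_side_inj h3 h2.
- by move=> _; apply: neg_side_inj h1 h2.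
Qed.

Lemma card_sides_le2 e : (#|sides e| <= 2)%N.
Proof.
rewrite -(@card_in_imset _ _ (pos_side^~ e)).
  by apply: leq_trans (max_card _) _; rewrite card_bool.
by move=> t1 t2; rewrite !inE; apply: side_inj_pos.
Qed.

Lemma side_nonint_inj e t t' : ~~ internal e -> side t e -> side t' e -> t = t'.
Proof.
move=> ni h1 h2; case: (eqVneq t t') => // tt'; case/negP: ni.
rewrite /Defs.internal eqn_leq card_sides_le2 /=.
apply: (@leq_trans #|[set t; t']|); first by rewrite cards2 tt'.
by apply/subset_leq_card/fintype.subsetP => x; rewrite !inE => /orP[]/eqP->.
Qed.

Lemma side_of_evset t e j k : evset e = [set tv t j; tv t k] -> j != k -> side t e.
Proof.
move=> HE jk; case: (eq_set2 HE (tv_neq _ jk)) => [[hs hd]|[hs hd]];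
  case: (ord3_orbit j k) => [kj|[kj|kj]]; rewrite ?kj ?eqxx // in jk; apply/orP.
- by left; apply/pos_sideP; exists j; rewrite hs hd kj.
- by right; apply/neg_sideP; exists k; rewrite hs hd kj ordS3K.
- by right; apply/neg_sideP; exists j; rewrite hs hd kj.
- by left; apply/pos_sideP; exists k; rewrite hs hd kj ordS3K.
Qed.

Lemma evset_side t e : side t e -> exists k, evset e = [set tv t k; tv t (ordS k)].
Proof.
case/orP=> [/pos_sideP[k [h1 h2]]|/neg_sideP[k [h1 h2]]]; exists k;
  by rewrite /Defs.evset h1 h2 // finset.setUC.
Qed.

Lemma evset_sub_side t e u : side t e -> u \in evset e -> u \in tvset tv t.
Proof. by case/evset_side=> k ->; rewrite !inE => /orP[]/eqP->; apply: tv_in. Qed.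

Lemma internal_sides e : internal e -> exists t1 t2, t1 != t2 /\ sides e = [set t1; t2].
Proof. by move/cards2P. Qed.

Lemma sides_internal e t1 t2 : internal e -> t1 != t2 ->
  side t1 e -> side t2 e -> sides e = [set t1; t2].
Proof.
move=> hi t12 s1 s2; apply/esym/eqP; rewrite eqEcard cards2 t12 (eqP hi) leqnn andbT.
by apply/fintype.subsetP => u; rewrite !inE => /orP[]/eqP->.
Qed.

Lemma sum_delta_internal e (F : T -> R) t1 t2 : t1 != t2 -> sides e = [set t1; t2] ->
  \sum_t F t * delta t e = delta t1 e * (F t1 - F t2) /\ delta t1 e ^+ 2 = 1.
Proof.
move=> t12 S12.
have s1 : side t1 e by move: (set21 t1 t2); rewrite -S12 inE.
have s2 : side t2 e by move: (set22 t1 t2); rewrite -S12 inE.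
have [d2 d1] : delta t2 e = - delta t1 e /\ delta t1 e ^+ 2 = 1.
  case/orP: s1 s2 => [p1|n1] /orP[p2|n2].
  - by case/eqP: t12; apply: pos_side_inj p1 p2.
  - by rewrite (delta_pos p1) (delta_neg n2) expr1n.
  - by rewrite (delta_neg n1) (delta_pos p2) opprK sqrrN expr1n.
  - by case/eqP: t12; apply: neg_side_inj n1 n2.
split=> //; rewrite (bigD1 t1) //= (bigD1 t2) /=; last by rewrite eq_sym.
rewrite big1 ?addr0 ?d2; first by ring.
move=> t /andP[h1 h2]; rewrite delta_out ?mulr0 //; apply: contra h1 => st.
have : t \in sides e by rewrite inE.
by rewrite S12 !inE (negPf h2) orbF.
Qed.

Lemma other_side e t i : internal e -> evset e = [set tv t i; tv t (ordS i)] ->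
  exists t', [/\ t' != t, side t' e &
    exists k, tv t' k = tv t (ordS i) /\ tv t' (ordS k) = tv t i].
Proof.
move=> hi HE.
have st : side t e by apply: (side_of_evset HE); rewrite ord3_eqF.
have [t1 [t2 [t12 S12]]] := internal_sides hi.
have [t' [t't st']] : exists t', t' != t /\ side t' e.
  have s1 : side t1 e by move: (set21 t1 t2); rewrite -S12 inE.
  have s2 : side t2 e by move: (set22 t1 t2); rewrite -S12 inE.
  by case: (eqVneq t1 t) => [<-|t1t]; [exists t2; rewrite eq_sym | exists t1].
exists t'; split => //; have [k Ek] := evset_side st'.
move: Ek; rewrite HE => /esym Ek.
have neq : tv t i != tv t (ordS i) by rewrite (inj_eq (@tv_inj t)) ord3_eqF.
case: (eq_set2 Ek neq) => [[h1 h2]|]; last by exists k.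
by case/eqP: t't; apply/esym/(eq_tri_of_oriented_side (i := i) (j := k)).
Qed.

Local Notation Omega := (Omega p tv).

Lemma bary_pos_interior t z : (forall i, 0 < bary t i z) -> Omega z.
Proof.
move=> z_pos.
suff [r r0 Hr] : exists2 r, 0 < r &
    forall i s, 0 < s -> s <= r -> forall y, ball z s y -> 0 < bary t i y.
  apply/nbhs_ballP; exists r => // y yz; exists t; apply/closed_triP => i.
  exact/ltW/(Hr i r).
apply: uniform_small => i; pose K := 1 + `|bary1 t i| + `|bary2 t i|.
have n1 := normr_ge0 (bary1 t i); have n2 := normr_ge0 (bary2 t i).
have K0 : 0 < K by rewrite /K; lra.
exists (bary t i z / K); first exact: divr_gt0.
move=> s s0; rewrite ler_pdivlMr // => sK y [/= b1 b2].
rewrite -ball_normE /= in b1 b2.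
have -> : y = shift z (vsub y z) 1.
  by rewrite /shift /vsub /= !mul1r !subrKC -surjective_pairing.
rewrite bary_shift mul1r.
have E1 : `|bary1 t i * (vsub y z).1| <= `|bary1 t i| * s.
  by rewrite normrM ler_wpM2l // distrC ltW.
have E2 : `|bary2 t i * (vsub y z).2| <= `|bary2 t i| * s.
  by rewrite normrM ler_wpM2l // distrC ltW.
have F1 := ler_norm (- (bary1 t i * (vsub y z).1)); rewrite normrN in F1.
have F2 := ler_norm (- (bary2 t i * (vsub y z).2)); rewrite normrN in F2.
rewrite /K in sK; nra.
Qed.

Lemma closed_tri_closure t x : closed_tri p tv t x -> closure Omega x.
Proof.
move/closed_triP => x_ge0 B /nbhs_ballP [e /= e0 HB].
have [g g3] : exists g, forall i, bary t i g = 1 / 3.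
  by exists (bary_comb (fun=> 1 / 3) (fun j => P t j)) => i;
    apply: bary_comb_tv; rewrite (sum_ord3 _ ord0); lra.
have [e1 e10 He1] := ball_shift x (vsub g x) e0.
pose s := Num.min e1 1.
have s0 : 0 < s by rewrite lt_min e10 ltr01.
have s1 : s <= 1 by rewrite ge_min lexx orbT.
exists (shift x (vsub g x) s); split; last by apply/HB/He1; rewrite // ge_min lexx.
apply: (bary_pos_interior (t := t)) => i; rewrite bary_segment g3.
by have := x_ge0 i; nra.
Qed.

Lemma eventually_outside_tri t x d : ~ closed_tri p tv t x ->
  exists2 e, 0 < e & forall s, 0 < s -> s <= e -> ~ closed_tri p tv t (shift x d s).
Proof.
move=> x_out; have [j xj] : exists j, bary t j x < 0.
  apply: contrapT => hn; apply/x_out/closed_triP => j.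
  by rewrite leNgt; apply/negP => xj; apply: hn; exists j.
pose c := bary1 t j * d.1 + bary2 t j * d.2.
have n0 := normr_ge0 c; have cn := ler_norm c.
exists (- bary t j x / (1 + `|c|)); first by apply: divr_gt0; lra.
move=> s s0; rewrite ler_pdivlMr; last by lra.
move=> se /closed_triP /(_ j); rewrite bary_shift -/c.
have : s * c <= s * `|c| by rewrite ler_wpM2l // ltW.
lra.
Qed.

Lemma side_of_common_point e t t' k x : t != t' ->
  evset e = [set tv t k; tv t (ordS k)] ->
  0 < bary t k x -> 0 < bary t (ordS k) x -> bary t (ordS (ordS k)) x = 0 ->
  closed_tri p tv t' x -> side t' e.
Proof.
move=> tt' Ee xk xSk xS2k xt'.
have x_common : conv p (tvset tv t :&: tvset tv t') x.
  case: (Hconf tt') => _ <-; split => //; apply/closed_triP => j.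
  by case: (ord3_orbit k j) => [->|[->|->]]; lra.
have in_t' j : 0 < bary t j x -> tv t j \in tvset tv t'.
  move=> xj; have [_ x0] := conv_bary (subsetIl _ _) x_common j.
  case: (boolP (tv t j \in tvset tv t :&: tvset tv t')) => [|/x0 xj0].
    by rewrite inE => /andP[].
  by move: xj; rewrite xj0 ltxx.
have /imsetP [j0 _ E0] := in_t' _ xk.
have /imsetP [j1 _ E1] := in_t' _ xSk.
apply: (side_of_evset (j := j0) (k := j1)); first by rewrite -E0 -E1.
by apply/eqP => j01; move: E1; rewrite -j01 -E0 => /tv_inj/eqP; rewrite ord3_eqF.
Qed.

Lemma nonint_edge_point_not_interior e t k x : ~~ internal e ->
  evset e = [set tv t k; tv t (ordS k)] ->
  0 < bary t k x -> 0 < bary t (ordS k) x -> bary t (ordS (ordS k)) x = 0 ->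
  ~ Omega x.
Proof.
move=> ni Ee xk xSk xS2k /nbhs_ballP [eps /= eps0 Heps].
have st : side t e by apply: (side_of_evset Ee); rewrite ord3_eqF.
pose d := vsub x (P t (ordS (ordS k))).
have [s s0 Hs] : exists2 s, 0 < s & forall t', (closed_tri p tv t' x \/
    ~ closed_tri p tv t' (shift x d s)) /\ ball x eps (shift x d s).
  suff [s s0 Hs] : exists2 s, 0 < s & forall t' s', 0 < s' -> s' <= s ->
      (closed_tri p tv t' x \/ ~ closed_tri p tv t' (shift x d s')) /\
      ball x eps (shift x d s').
    by exists s => // t'; apply: Hs.
  apply: uniform_small => t'; have [eb eb0 Hb] := ball_shift x d eps0.
  case: (pselect (closed_tri p tv t' x)) => xt'.
    by exists eb => // s' s0 se; split; [left | apply: Hb].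
  have [e1 e10 He1] := eventually_outside_tri d xt'.
  exists (Num.min eb e1); first by rewrite lt_min eb0.
  move=> s' s0; rewrite le_min => /andP[se1 se2].
  by split; [right; apply: He1 | apply: Hb].
have [t' yt'] : exists t', closed_tri p tv t' (shift x d s) by apply: Heps; case: (Hs t).
have [[xt'|//] _] := Hs t'.
case: (eqVneq t t') => [tt'|tt'].
  move: yt'; rewrite -tt' => /closed_triP /(_ (ordS (ordS k))).
  by rewrite bary_shift /d bary_vsub xS2k bary_vertex eqxx /=; lra.
have st' := side_of_common_point tt' Ee xk xSk xS2k xt'.
by case/eqP: tt'; apply: side_nonint_inj ni st st'.
Qed.

Hypothesis Hedges : mesh_edges tv src dst.

Lemma nonint_segment_bdry e : ~~ internal e -> (segment p src dst e `<=` bdry p tv)%classic.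
Proof.
move=> ni x Sx; have [t st] := Hedges.1 e; have [k Ee] := evset_side st.
have e_sub_t : evset e \subset tvset tv t.
  by apply/fintype.subsetP => u; apply: evset_sub_side.
have x_bary := conv_bary e_sub_t Sx.
have xS2k : bary t (ordS (ordS k)) x = 0.
  by apply: (x_bary _).2; rewrite Ee !inE !(inj_eq (@tv_inj t)) !ord3_eqF.
split; first by apply: (closed_tri_closure (t := t)); apply/closed_triP => j; case: (x_bary j).
move=> /nbhs_interior /nbhs_ballP [eps /= eps0 Heps].
pose w (j : 'I_3) : R := if j == ordS (ordS k) then 0 else 1 / 2.
have [m mw] : exists m, forall j, bary t j m = w j.
  exists (bary_comb w (fun j => P t j)) => j; apply: bary_comb_tv.
  by rewrite (sum_ord3 _ k) /w eqxx !ord3_eqF; lra.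
have [eb eb0 Hb] := ball_shift x (vsub m x) eps0.
pose s := Num.min eb (1 / 2).
have s0 : 0 < s by rewrite lt_min eb0; lra.
have s1 : s <= 1 / 2 by rewrite ge_min lexx orbT.
apply: (nonint_edge_point_not_interior (x := shift x (vsub m x) s) ni Ee);
  rewrite ?bary_segment ?mw /w ?eqxx ?ord3_eqF ?xS2k.
- by have := (x_bary k).1; nra.
- by have := (x_bary (ordS k)).1; nra.
- by rewrite ?xS2k; ring.
- by apply: Heps; apply: Hb; rewrite // ge_min lexx.
Qed.

Lemma open_tri_not_in_other t t' y : t != t' ->
  closed_tri p tv t y -> (forall k, 0 < bary t' k y) -> False.
Proof.
move=> tt' yt y_pos.
have y_common : conv p (tvset tv t :&: tvset tv t') y.
  by case: (Hconf tt') => _ <-; split => //; apply/closed_triP => k; apply: ltW.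
have [k k_out] : exists k, tv t' k \notin tvset tv t :&: tvset tv t'.
  have t't : t' != t by rewrite eq_sym.
  apply: contrapT => all_in; apply: (tvset_sub_inter t't).
  rewrite finset.setIC; apply/fintype.subsetP => u /imsetP [k _ ->].
  by apply: contrapT => /negP k_out; apply: all_in; exists k.
have [_ /(_ k_out)] := conv_bary (subsetIr _ _) y_common k.
by move: (y_pos k) => /gt_eqF /eqP.
Qed.

Hypothesis Hpoly : polygonal_boundary p tv src dst.

Section Star.
Variable v : V.

Definition vpos t : 'I_3 := odflt ord0 [pick i | tv t i == v].

Lemma tv_vpos t : v \in tvset tv t -> tv t (vpos t) = v.
Proof.
move=> /imsetP [i _ vi]; rewrite /vpos; case: pickP => [j /eqP //|].
by move/(_ i); rewrite vi eqxx.
Qed.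

Lemma vpos_eq t k : tv t k = v -> vpos t = k.
Proof. by move=> kv; apply: (@tv_inj t); rewrite kv tv_vpos // -kv tv_in. Qed.

Definition vnext t := tv t (ordS (vpos t)).
Definition vprev t := tv t (ordS (ordS (vpos t))).

Lemma vnext_vprev_neq t : v \in tvset tv t ->
  [/\ vnext t != v, vprev t != v & vnext t != vprev t].
Proof.
by move=> vt; rewrite /vnext /vprev -(tv_vpos vt) !(inj_eq (@tv_inj t)) !ord3_eqF.
Qed.

Definition enext t := vsub (p (vnext t)) (p v).
Definition eprev t := vsub (p (vprev t)) (p v).
Definition bisector t : R * R := ((enext t).1 + (eprev t).1, (enext t).2 + (eprev t).2).

(* the closed angular sector of [t] at [v] contains the direction [d] *)
Definition in_sector t d : bool :=
  (0 <= sg * cross d (eprev t)) && (0 <= sg * cross (enext t) d).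

Definition next_internal t := exists e, evset e = [set v; vnext t] /\ internal e.
Definition prev_internal t := exists e, evset e = [set vprev t; v] /\ internal e.

Lemma cross_enext_eprev t : v \in tvset tv t -> cross (enext t) (eprev t) = D t.
Proof. by move=> vt; rewrite -area2_vsub -(area2_tv t (vpos t)) tv_vpos. Qed.

Lemma bary_shift_vertex t d s : v \in tvset tv t ->
  bary t (ordS (vpos t)) (shift (p v) d s) = s * (cross d (eprev t) / D t) /\
  bary t (ordS (ordS (vpos t))) (shift (p v) d s) = s * (cross (enext t) d / D t).
Proof.
move=> vt; rewrite /bary !ordS3K tv_vpos // area2_shift_l area2_shift_r !mulrA.
by split.
Qed.

Lemma bisector_not_in_other_sector t t' : v \in tvset tv t -> v \in tvset tv t' ->
  t != t' -> ~~ in_sector t (bisector t').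
Proof.
move=> vt vt' tt'; apply/negP => /andP[c1 c2]; set d := bisector t' in c1 c2.
pose a := cross d (eprev t) / D t; pose b := cross (enext t) d / D t.
have a0 : 0 <= a by rewrite /a (div_sign _ (sg_tri_det t)) divr_ge0 // ltW.
have b0 : 0 <= b by rewrite /b (div_sign _ (sg_tri_det t)) divr_ge0 // ltW.
pose s := 1 / (4 * (1 + a + b)).
have s0 : 0 < s by rewrite /s divr_gt0 //; lra.
have sab : s * (4 * (1 + a + b)) = 1 by rewrite /s mul1r mulVf // gt_eqF //; lra.
pose y := shift (p v) d s.
have [ya yb] := bary_shift_vertex d s vt.
have y_sum := bary_sum t y; rewrite (sum_ord3 _ (vpos t)) ya yb -/a -/b in y_sum.
apply: (open_tri_not_in_other (y := y) tt').
  apply/closed_triP => k; case: (ord3_orbit (vpos t) k) => [->|[->|->]].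
  - suff : s * a + s * b <= 1 / 4 by lra.
    nra.
  - by rewrite ya mulr_ge0 // ltW.
  - by rewrite yb mulr_ge0 // ltW.
have [y'a y'b] := bary_shift_vertex d s vt'.
have d_prev : cross d (eprev t') = D t'.
  by rewrite -cross_enext_eprev // /d /bisector /cross /=; ring.
have d_next : cross (enext t') d = D t'.
  by rewrite -cross_enext_eprev // /d /bisector /cross /=; ring.
rewrite d_prev divff // mulr1 in y'a; rewrite d_next divff // mulr1 in y'b.
have y'_sum := bary_sum t' y; rewrite (sum_ord3 _ (vpos t')) y'a y'b in y'_sum.
have s14 : s <= 1 / 4 by nra.
by move=> k; case: (ord3_orbit (vpos t') k) => [->|[->|->]]; rewrite ?y'a ?y'b //; lra.
Qed.

Lemma bisector_neq0 t : v \in tvset tv t -> 0 < (bisector t).1 ^+ 2 + (bisector t).2 ^+ 2.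
Proof.
move=> vt; rewrite lt0r addr_ge0 ?sqr_ge0 // andbT.
apply: contra (tri_det_neq0 t) => /eqP /sqr_add_eq0 [b1 b2].
rewrite -cross_enext_eprev // /cross.
have -> : (eprev t).1 = - (enext t).1 by move: b1; rewrite /bisector /=; lra.
have -> : (eprev t).2 = - (enext t).2 by move: b2; rewrite /bisector /=; lra.
by apply/eqP; ring.
Qed.

Section Class.
Variable K : {set T}.
Hypothesis K_v : forall t, t \in K -> v \in tvset tv t.
Hypothesis K_closed : forall t t' e, internal e -> side t e -> side t' e ->
  v \in evset e -> (t \in K) = (t' \in K).

Lemma next_in_class t : t \in K -> next_internal t ->
  exists2 t', t' \in K & vprev t' = vnext t.
Proof.
move=> tK [e [Ee ei]]; have vt := K_v tK.
rewrite -{1}(tv_vpos vt) in Ee.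
have [t' [_ st' [k [k_next Sk_v]]]] := other_side ei Ee.
rewrite tv_vpos // in Sk_v.
have st : side t e by apply: (side_of_evset Ee); rewrite ord3_eqF.
exists t'; last by rewrite /vprev (vpos_eq Sk_v) ordS3K.
by rewrite -(K_closed ei st st') // Ee (tv_vpos vt) set21.
Qed.

Lemma prev_in_class t : t \in K -> prev_internal t ->
  exists2 t', t' \in K & vnext t' = vprev t.
Proof.
move=> tK [e [Ee ei]]; have vt := K_v tK.
rewrite -(tv_vpos vt) -(ordS3K (vpos t)) in Ee.
have [t' [_ st' [k [k_v Sk_prev]]]] := other_side ei Ee.
rewrite ordS3K tv_vpos // in k_v.
have st : side t e by apply: (side_of_evset Ee); rewrite ordS3K ord3_eqF.
exists t'; last by rewrite /vnext (vpos_eq k_v) Sk_prev.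
by rewrite -(K_closed ei st st') // Ee ordS3K (tv_vpos vt) set22.
Qed.

(* Otherwise crossing next edges would keep [eprev] strictly on one side of [d]
   while strictly increasing its cotangent to [d], which cannot go on forever. *)
Lemma class_covers_directions t0 d : t0 \in K -> (forall t, t \in K -> next_internal t) ->
  0 < d.1 ^+ 2 + d.2 ^+ 2 -> exists2 t, t \in K & in_sector t d.
Proof.
move=> t0K all_next d0; apply: contrapT => no_sector.
have outside t : t \in K -> sg * cross d (eprev t) < 0 \/ 0 < sg * cross d (enext t).
  move=> tK; have : ~~ in_sector t d by apply/negP => td; apply: no_sector; exists t.
  rewrite negb_and -!ltNge => /orP[prev_neg|next_neg]; first by left.
  by right; rewrite cross_anti mulrN oppr_lt0 in next_neg.
have succ t : t \in K -> exists2 t', t' \in K & eprev t' = enext t.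
  by move=> tK; have [t' t'K t't] := next_in_class tK (all_next t tK);
    exists t' => //; rewrite /eprev /enext t't.
pose S eps := [set t in K | 0 < eps * (sg * cross d (eprev t))].
have [eps [eps2 [t1 t1S] S_succ]] : exists eps : R, [/\ eps ^+ 2 = 1,
    exists t1, t1 \in S eps & forall t, t \in S eps -> exists2 t', t' \in S eps & eprev t' = enext t].
  case: (pselect (exists2 t, t \in K & 0 <= sg * cross d (eprev t))) => [[t1 t1K t1d]|none].
    have to_next t : t \in K -> 0 <= sg * cross d (eprev t) -> 0 < sg * cross d (enext t).
      by move=> tK td; case: (outside t tK); rewrite // ltNge td.
    exists 1; split; first by rewrite expr1n.
      have [t2 t2K t2t1] := succ t1 t1K.
      by exists t2; rewrite inE t2K mul1r t2t1 to_next.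
    move=> t; rewrite inE mul1r => /andP[tK td]; have [t' t'K t't] := succ t tK.
    by exists t' => //; rewrite inE t'K mul1r t't to_next // ltW.
  have neg t : t \in K -> sg * cross d (eprev t) < 0.
    by move=> tK; rewrite ltNge; apply/negP => td; apply: none; exists t.
  exists (-1); split; first by rewrite sqrrN expr1n.
    by exists t0; rewrite inE t0K mulN1r oppr_gt0 neg.
  move=> t; rewrite inE => /andP[tK _]; have [t' t'K t't] := succ t tK.
  by exists t' => //; rewrite inE t'K mulN1r oppr_gt0 neg.
pose F t := sg * (dot d (eprev t) / cross d (eprev t)).
apply: (no_strict_ascent (F := F) t1S) => t tS; have [t' t'S t't] := S_succ t tS.
exists t' => //; rewrite /F t't; apply: cot_lt => //.
  by rewrite cross_enext_eprev ?sg_tri_det // K_v //; move: tS; rewrite inE => /andP[].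
move: tS t'S; rewrite !inE t't => /andP[_ h1] /andP[_ h2].
have := mulr_gt0 h2 h1.
have -> : eps * (sg * cross d (enext t)) * (eps * (sg * cross d (eprev t)))
    = (eps ^+ 2 * sg ^+ 2) * (cross d (enext t) * cross d (eprev t)) by ring.
by rewrite eps2 mul1r pmulr_rgt0 // lt0r sqrf_eq0 sqr_ge0 andbT; apply: contraTneq h1 => ->;
  rewrite mul0r mulr0 ltxx.
Qed.

(* If every triangle of [K] had an internal previous edge, crossing it would be
   an injective, hence surjective, self-map of [K]; then every next edge would
   be the previous edge of a neighbour, hence internal too. *)
Lemma class_prev_bdry : (exists2 t, t \in K & ~ next_internal t) ->
  exists2 t, t \in K & ~ prev_internal t.
Proof.
move=> [ta taK ta_bdry]; apply: contrapT => no_bdry.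
have all_prev t : t \in K -> prev_internal t.
  by move=> tK; apply: contrapT => h; apply: no_bdry; exists t.
pose pr t := odflt t [pick t' in K | vnext t' == vprev t].
have prP t : t \in K -> pr t \in K /\ vnext (pr t) = vprev t.
  move=> tK; rewrite /pr; case: pickP => [t' /andP[t'K /eqP] //|none].
  have [t' t'K t't] := prev_in_class tK (all_prev t tK).
  by move: (none t'); rewrite t'K t't eqxx.
have pr_inj : {in K &, injective pr}.
  move=> t1 t2 t1K t2K pr12; have [_ h1] := prP t1 t1K; have [_ h2] := prP t2 t2K.
  have prev12 : vprev t1 = vprev t2 by rewrite -h1 -h2 pr12.
  apply: (eq_tri_of_oriented_side prev12).
  by rewrite !ordS3K !tv_vpos ?K_v.
have : ta \in pr @: K.
  suff -> : pr @: K = K by [].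
  apply/eqP; rewrite eqEcard card_in_imset // leqnn andbT.
  by apply/fintype.subsetP => u /imsetP [t tK ->]; case: (prP t tK).
case/imsetP=> t1 t1K ta_pr; have [_ next_prev] := prP t1 t1K.
have [e [Ee ei]] := all_prev t1 t1K; apply: ta_bdry; exists e; split => //.
by rewrite Ee ta_pr next_prev finset.setUC.
Qed.

Lemma class_next_bdry t0 t' : t0 \in K -> v \in tvset tv t' -> t' \notin K ->
  exists2 t, t \in K & ~ next_internal t.
Proof.
move=> t0K vt' t'K; apply: contrapT => no_bdry.
have all_next t : t \in K -> next_internal t.
  by move=> tK; apply: contrapT => h; apply: no_bdry; exists t.
have [u uK u_sector] := class_covers_directions t0K all_next (bisector_neq0 vt').
have ut' : u != t' by apply: contraNneq t'K => <-.
by move: u_sector; rewrite (negPf (bisector_not_in_other_sector (K_v uK) vt' ut')).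
Qed.

End Class.

Lemma next_bdry_edge t : v \in tvset tv t -> ~ next_internal t ->
  exists2 e, evset e = [set v; vnext t] & ~~ internal e /\ side t e.
Proof.
move=> vt not_int; have [e Ee] := Hedges.2.1 t (vpos t).
rewrite tv_vpos // in Ee; exists e => //; split.
  by apply/negP => ei; apply: not_int; exists e.
by apply: (side_of_evset (j := vpos t) (k := ordS (vpos t))); rewrite ?tv_vpos // ord3_eqF.
Qed.

Lemma prev_bdry_edge t : v \in tvset tv t -> ~ prev_internal t ->
  exists2 e, evset e = [set vprev t; v] & ~~ internal e /\ side t e.
Proof.
move=> vt not_int; have [e Ee] := Hedges.2.1 t (ordS (ordS (vpos t))).
rewrite ordS3K tv_vpos // in Ee; exists e => //; split.
  by apply/negP => ei; apply: not_int; exists e.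
apply: (side_of_evset (j := ordS (ordS (vpos t))) (k := vpos t)); rewrite ?tv_vpos //.
by rewrite ord3_eqF.
Qed.

Lemma vertex_in_segment e : v \in evset e -> segment p src dst e (p v).
Proof.
move=> ve; exists (fun u => (v == u)%:R); split; first by move=> u; apply: ler0n.
split; first by move=> u uS; case: eqP => // vu; move: uS; rewrite -vu ve.
split; last by rewrite !sum_indicator -surjective_pairing.
by rewrite -[RHS](sum_indicator (fun=> 1) v); apply: eq_bigr => u _; rewrite mulr1.
Qed.

Lemma three_bdry_edgesF e1 e2 e3 :
  [/\ v \in evset e1, v \in evset e2 & v \in evset e3] ->
  [/\ ~~ internal e1, ~~ internal e2 & ~~ internal e3] ->
  [/\ e1 != e2, e1 != e3 & e2 != e3] -> False.
Proof.
move=> [v1 v2 v3] [n1 n2 n3] [e12 e13 e23].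
have [f1 [f2 [_ [_ [_ [_ [_ two]]]]]]] :=
  Hpoly (nonint_segment_bdry n1 (vertex_in_segment v1)).
move: e12 e13 e23.
case: (two e1 v1 (nonint_segment_bdry n1)) => ->; case: (two e2 v2 (nonint_segment_bdry n2)) => ->;
  by case: (two e3 v3 (nonint_segment_bdry n3)) => ->; rewrite ?eqxx.
Qed.

Lemma next_prev_bdry_edge_neq t t' e e' : v \in tvset tv t ->
  evset e = [set v; vnext t] -> evset e' = [set vprev t'; v] ->
  ~~ internal e -> side t e -> side t' e' -> e != e'.
Proof.
move=> vt Ee Ee' ni st st'; apply/eqP => ee'; rewrite -ee' in Ee' st'.
rewrite -(side_nonint_inj ni st st') in Ee'.
have [_ prev_v next_prev] := vnext_vprev_neq vt.
case: (eq_set2 (etrans (esym Ee) Ee') prev_v) => [[v_prev _]|[_ next_v]].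
  by rewrite -v_prev eqxx in prev_v.
by rewrite next_v eqxx in next_prev.
Qed.

Lemma nonint_side_neq t t' e e' : ~~ internal e -> side t e -> side t' e' -> t != t' -> e != e'.
Proof.
by move=> ni st st'; apply: contraNneq => ee'; rewrite -ee' in st'; rewrite (side_nonint_inj ni st st').
Qed.

Section Splitting.
Variable C : {set T}.
Hypothesis C_closed : forall t t' e, internal e -> side t e -> side t' e ->
  v \in evset e -> (t \in C) = (t' \in C).

Definition star_part (b : bool) : {set T} := [set u | (v \in tvset tv u) && ((u \in C) == b)].

Lemma star_part_v b u : u \in star_part b -> v \in tvset tv u.
Proof. by rewrite inE => /andP[]. Qed.

Lemma star_part_closed b u u' e : internal e -> side u e -> side u' e -> v \in evset e ->
  (u \in star_part b) = (u' \in star_part b).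
Proof.
move=> ei su su' ve; rewrite !inE (evset_sub_side su ve) (evset_sub_side su' ve).
by rewrite (C_closed ei su su' ve).
Qed.

Lemma star_connected t t' : v \in tvset tv t -> v \in tvset tv t' -> t \in C -> t' \in C.
Proof.
move=> vt vt' tC; apply: contrapT => /negP t'C.
have tK1 : t \in star_part true by rewrite inE vt tC.
have t'K1 : t' \notin star_part true by rewrite inE (negPf t'C) andbF.
have t'K2 : t' \in star_part false by rewrite inE vt' (negPf t'C).
have tK2 : t \notin star_part false by rewrite inE tC andbF.
have K12 u u' : u \in star_part true -> u' \in star_part false -> u != u'.
  by rewrite !inE => /andP[_ /eqP uC] /andP[_ /eqP u'C]; apply/eqP => uu'; rewrite uu' u'C in uC.
have [ta taK1 ta_bdry] := class_next_bdry (@star_part_v _) (@star_part_closed _) tK1 vt' t'K1.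
have [tb tbK1 tb_bdry] :=
  class_prev_bdry (@star_part_v _) (@star_part_closed _) (ex_intro2 _ _ ta taK1 ta_bdry).
have [tc tcK2 tc_bdry] := class_next_bdry (@star_part_v _) (@star_part_closed _) t'K2 vt tK2.
have [ea Ea [na sa]] := next_bdry_edge (star_part_v taK1) ta_bdry.
have [eb Eb [nb sb]] := prev_bdry_edge (star_part_v tbK1) tb_bdry.
have [ec Ec [nc sc]] := next_bdry_edge (star_part_v tcK2) tc_bdry.
apply: (three_bdry_edgesF (e1 := ea) (e2 := eb) (e3 := ec)).
- by rewrite Ea Eb Ec set21 set22 set21.
- by [].
split; first exact: (next_prev_bdry_edge_neq (star_part_v taK1) Ea Eb).
- exact: (nonint_side_neq na sa sc (K12 _ _ taK1 tcK2)).
- exact: (nonint_side_neq nb sb sc (K12 _ _ tbK1 tcK2)).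
Qed.

End Splitting.

End Star.

Local Notation G := (Gmx p tv src dst).
Local Notation RowI := (RowI tv src dst).
Local Notation Eint := (Eint tv src dst).
Local Notation a_coef e := (a_coef p src dst e).
Local Notation b_coef e := (b_coef p src dst e).
Local Notation c_coef e := (c_coef p src dst e).

Definition rowX t : RowI := inl (inl (inl t)).
Definition rowY t : RowI := inl (inl (inr t)).
Definition rowZ t : RowI := inl (inr t).
Definition rowW e : RowI := inr e.

Definition rowv (f : RowI -> R) : 'rV[R]_#|{: RowI}| := \row_k f (enum_val k).

Lemma rowvK (u : 'rV[R]_#|{: RowI}|) : rowv (fun r => u 0 (enum_rank r)) = u.
Proof. by apply/rowP => k; rewrite mxE enum_valK. Qed.

Lemma rowv_mulG f c : (rowv f *m G) 0 (enum_rank c) = \sum_r f r * Gfun p r c.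
Proof.
rewrite !mxE (big_enum_val (fun r => f r * Gfun p r c)) /=.
by apply: eq_bigr => k _; rewrite !mxE enum_rankK.
Qed.

Definition jump (F : T -> R) e : R := \sum_t F t * delta t e.

Lemma rowv_mulG_eq0 f : rowv f *m G = 0 <-> forall e : Eint,
  [/\ jump (fun t => f (rowX t)) (val e) + f (rowW e) * c_coef (val e) = 0,
      jump (fun t => f (rowY t)) (val e) + f (rowW e) * a_coef (val e) = 0 &
      jump (fun t => f (rowZ t)) (val e) + f (rowW e) * b_coef (val e) = 0].
Proof.
have sum_Gfun c : \sum_r f r * Gfun p r c = match c with
    | inl (inl e) => jump (fun t => f (rowX t)) (val e) + f (rowW e) * c_coef (val e)
    | inl (inr e) => jump (fun t => f (rowY t)) (val e) + f (rowW e) * a_coef (val e)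
    | inr e => jump (fun t => f (rowZ t)) (val e) + f (rowW e) * b_coef (val e) end.
  have zero (F : T -> R) : \sum_t F t * 0 = 0 by apply: big1 => t _; rewrite mulr0.
  by case: c => [[e|e]|e]; rewrite !big_sumType /= !zero ?add0r ?addr0
    (sum_mul_if_eq (fun e => f (inr e))).
split=> [f0 e|f0].
  by rewrite -[_ + _](sum_Gfun (inl (inl e))) -[in X in [/\ _, X & _]](sum_Gfun (inl (inr e)))
    -[in X in [/\ _, _ & X]](sum_Gfun (inr e)) -!rowv_mulG f0 !mxE.
apply/rowP => j; rewrite [RHS]mxE -[j]enum_valK rowv_mulG sum_Gfun.
by case: (enum_val j) => [[e|e]|e]; case: (f0 e).
Qed.

Definition piece (f : RowI -> R) t : R * R -> R := aff (f (rowX t)) (f (rowY t)) (f (rowZ t)).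

Lemma internal_line_norm_neq0 (e : Eint) : a_coef (val e) ^+ 2 + b_coef (val e) ^+ 2 != 0.
Proof.
have [t1 [t2 [_ S12]]] := internal_sides (valP e).
have [k Ek] : exists k, evset (val e) = [set tv t1 k; tv t1 (ordS k)].
  by apply: evset_side; move: (set21 t1 t2); rewrite -S12 inE.
apply: line_norm_neq0; have neq : tv t1 k != tv t1 (ordS k).
  by rewrite (inj_eq (@tv_inj t1)) ord3_eqF.
case: (eq_set2 Ek neq) => [] [-> ->]; rewrite (inj_eq (@pos_tv_inj t1)) ord3_eqF //.
Qed.

Lemma ker_continuous f : rowv f *m G = 0 ->
  forall (e : Eint) t1 t2, t1 != t2 -> sides (val e) = [set t1; t2] ->
  piece f t1 (p (src (val e))) = piece f t2 (p (src (val e))) /\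
  piece f t1 (p (dst (val e))) = piece f t2 (p (dst (val e))).
Proof.
move=> /rowv_mulG_eq0 f0 e t1 t2 t12 S12; have [Jc Ja Jb] := f0 e.
have [dX d1] := sum_delta_internal (fun t => f (rowX t)) t12 S12.
have [dY _] := sum_delta_internal (fun t => f (rowY t)) t12 S12.
have [dZ _] := sum_delta_internal (fun t => f (rowZ t)) t12 S12.
rewrite /jump ?dX ?dY ?dZ in Jc Ja Jb.
pose l := - (f (rowW e) * delta t1 (val e)).
have solve (J c : R) : delta t1 (val e) * J + f (rowW e) * c = 0 -> J = l * c.
  move=> /(congr1 (fun z => delta t1 (val e) * z)); rewrite mulr0 mulrDr mulrA -expr2 d1.
  by rewrite mul1r /l => /eqP; rewrite addr_eq0 => /eqP ->; ring.
have [Esrc Edst] := aff_line_eq0 l (p (src (val e))) (p (dst (val e))).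
rewrite /piece; split; apply/eqP; rewrite -subr_eq0 aff_sub (solve _ _ Jc) (solve _ _ Ja) (solve _ _ Jb);
  by apply/eqP.
Qed.

Definition edge_weight (Y Z : T -> R) (e : Eint) : R :=
  - (jump Y (val e) * a_coef (val e) + jump Z (val e) * b_coef (val e))
  / (a_coef (val e) ^+ 2 + b_coef (val e) ^+ 2).

Definition kervec (X Y Z : T -> R) (r : RowI) : R :=
  match r with
  | inl (inl (inl t)) => X t
  | inl (inl (inr t)) => Y t
  | inl (inr t) => Z t
  | inr e => edge_weight Y Z e
  end.

Lemma kervec_mulG X Y Z :
  (forall (e : Eint) t1 t2, t1 != t2 -> sides (val e) = [set t1; t2] ->
    aff (X t1) (Y t1) (Z t1) (p (src (val e))) = aff (X t2) (Y t2) (Z t2) (p (src (val e))) /\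
    aff (X t1) (Y t1) (Z t1) (p (dst (val e))) = aff (X t2) (Y t2) (Z t2) (p (dst (val e)))) ->
  rowv (kervec X Y Z) *m G = 0.
Proof.
move=> cont; apply/rowv_mulG_eq0 => e /=.
have [t1 [t2 [t12 S12]]] := internal_sides (valP e).
have [dX _] := sum_delta_internal X t12 S12.
have [dY _] := sum_delta_internal Y t12 S12.
have [dZ _] := sum_delta_internal Z t12 S12.
have [src_eq dst_eq] := cont e t1 t2 t12 S12.
have jump_eq0 (x : R * R) : aff (X t1) (Y t1) (Z t1) x = aff (X t2) (Y t2) (Z t2) x ->
    aff (jump X (val e)) (jump Y (val e)) (jump Z (val e)) x = 0.
  move=> /eqP; rewrite -subr_eq0 aff_sub /jump dX dY dZ /aff => /eqP J0.
  by rewrite -(mulr0 (delta t1 (val e))) -J0; ring.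
have [hc ha hb] :=
  aff_eq0_line (internal_line_norm_neq0 e) (jump_eq0 _ src_eq) (jump_eq0 _ dst_eq).
set l := _ / _ in hc ha hb.
have -> : edge_weight Y Z e = - l by rewrite /edge_weight /l mulNr.
by rewrite hc ha hb !mulNr; split; apply/eqP; rewrite subr_eq0; apply/eqP.
Qed.

Definition hat0 v t : R := \sum_i (tv t i == v)%:R * bary0 t i.
Definition hat1 v t : R := \sum_i (tv t i == v)%:R * bary1 t i.
Definition hat2 v t : R := \sum_i (tv t i == v)%:R * bary2 t i.

Lemma hat_vertex v t j : aff (hat0 v t) (hat1 v t) (hat2 v t) (P t j) = (tv t j == v)%:R.
Proof.
have -> : aff (hat0 v t) (hat1 v t) (hat2 v t) (P t j) = \sum_i (tv t i == v)%:R * bary t i (P t j).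
  rewrite /aff /hat0 /hat1 /hat2 !mulr_suml -!big_split /=.
  by apply: eq_bigr => i _; rewrite baryE /aff; ring.
rewrite (bigD1 j) //= bary_vertex eqxx mulr1 big1 ?addr0 // => i /negPf ij.
by rewrite bary_vertex ij mulr0.
Qed.

Definition hatv v := rowv (kervec (hat0 v) (hat1 v) (hat2 v)).

Lemma hatv_ker v : hatv v *m G = 0.
Proof.
apply: kervec_mulG => e t1 t2 _ S12.
have s1 : side t1 (val e) by move: (set21 t1 t2); rewrite -S12 inE.
have s2 : side t2 (val e) by move: (set22 t1 t2); rewrite -S12 inE.
have at_end u : u \in evset (val e) ->
    aff (hat0 v t1) (hat1 v t1) (hat2 v t1) (p u) = aff (hat0 v t2) (hat1 v t2) (hat2 v t2) (p u).
  move=> ue; have /imsetP [j1 _ E1] := evset_sub_side s1 ue.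
  have /imsetP [j2 _ E2] := evset_sub_side s2 ue.
  by rewrite {1}E1 hat_vertex -E1 E2 hat_vertex -E2.
by split; apply: at_end; rewrite !inE eqxx ?orbT.
Qed.

Hypothesis Hverts : mesh_vertices tv.

Lemma ker_eq0 g : rowv g *m G = 0 ->
  (forall t, [/\ g (rowX t) = 0, g (rowY t) = 0 & g (rowZ t) = 0]) -> forall r, g r = 0.
Proof.
move=> /rowv_mulG_eq0 g0 gT [[[t|t]|t]|e]; try by case: (gT t).
have jump0 (F : T -> R) : (forall t, F t = 0) -> jump F (val e) = 0.
  by move=> F0; apply: big1 => t _; rewrite F0 mul0r.
have [_ Ya Zb] := g0 e; rewrite !jump0 ?add0r in Ya Zb; try by move=> t; case: (gT t).
rewrite /rowW in Ya Zb; apply/eqP.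
rewrite -(mulIr_eq0 _ (rregP (internal_line_norm_neq0 e))); apply/eqP.
have -> : g (inr e) * (a_coef (val e) ^+ 2 + b_coef (val e) ^+ 2)
    = g (inr e) * a_coef (val e) * a_coef (val e) + g (inr e) * b_coef (val e) * b_coef (val e).
  by ring.
by rewrite Ya Zb !mul0r addr0.
Qed.

Lemma sum_hatv_entry (c : V -> R) r :
  (\sum_v c v *: hatv v) 0 (enum_rank r) = \sum_v c v * kervec (hat0 v) (hat1 v) (hat2 v) r.
Proof. by rewrite summxE; apply: eq_bigr => v _; rewrite !mxE enum_rankK. Qed.

Section Span.
Variable u : 'rV[R]_#|{: RowI}|.
Hypothesis u_ker : u *m G = 0.
Let f r := u 0 (enum_rank r).

Lemma piece_vertex_agree v t t' : v \in tvset tv t -> v \in tvset tv t' ->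
  piece f t (p v) = piece f t' (p v).
Proof.
move=> vt vt'; have f_ker : rowv f *m G = 0 by rewrite rowvK.
suff : t' \in [set s | piece f s (p v) == piece f t (p v)] by rewrite inE => /eqP.
apply: (star_connected (v := v) _ vt vt'); last by rewrite inE.
move=> t1 t2 e ei s1 s2 ve; rewrite !inE; case: (eqVneq t1 t2) => [-> //|t12].
have [at_src at_dst] := ker_continuous f_ker (e := exist _ e ei) t12 (sides_internal ei t12 s1 s2).
by move: ve; rewrite !inE => /orP[]/eqP ->; rewrite ?at_src ?at_dst.
Qed.

Definition nodal_value v : R :=
  if [pick t | v \in tvset tv t] is Some t then piece f t (p v) else 0.

Lemma nodal_valueE v t : v \in tvset tv t -> nodal_value v = piece f t (p v).
Proof.
move=> vt; rewrite /nodal_value; case: pickP => [t' vt'|none]; first exact: piece_vertex_agree.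
by move: (none t); rewrite vt.
Qed.

Lemma piece_interp t :
  [/\ f (rowX t) = \sum_v nodal_value v * hat0 v t,
      f (rowY t) = \sum_v nodal_value v * hat1 v t &
      f (rowZ t) = \sum_v nodal_value v * hat2 v t].
Proof.
pose dX := f (rowX t) - \sum_v nodal_value v * hat0 v t.
pose dY := f (rowY t) - \sum_v nodal_value v * hat1 v t.
pose dZ := f (rowZ t) - \sum_v nodal_value v * hat2 v t.
suff [] : [/\ dX = 0, dY = 0 & dZ = 0] by move=> /subr0_eq ? /subr0_eq ? /subr0_eq ?.
apply: (aff_eq0_tri (t := t)) => j.
have -> : aff dX dY dZ (P t j) = piece f t (P t j)
    - \sum_v nodal_value v * aff (hat0 v t) (hat1 v t) (hat2 v t) (P t j).
  rewrite /dX /dY /dZ /piece /aff [X in _ = _ - X](eq_bigr (fun v =>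
    nodal_value v * hat0 v t + nodal_value v * hat1 v t * (P t j).1
    + nodal_value v * hat2 v t * (P t j).2)); last by move=> v _; ring.
  by rewrite !big_split /= -!mulr_suml; ring.
rewrite (eq_bigr (fun v => (tv t j == v)%:R * nodal_value v)); last first.
  by move=> v _; rewrite hat_vertex mulrC.
by rewrite sum_indicator -nodal_valueE ?subrr // tv_in.
Qed.

Lemma ker_span : u = \sum_v nodal_value v *: hatv v.
Proof.
apply/eqP; rewrite -subr_eq0; apply/eqP.
set u' := u - _; pose g r := u' 0 (enum_rank r).
have g_ker : rowv g *m G = 0.
  rewrite rowvK mulmxBl mulmx_suml u_ker big1 ?subrr // => v _.
  by rewrite -scalemxAl hatv_ker scaler0.
have gE r : g r = f r - \sum_v nodal_value v * kervec (hat0 v) (hat1 v) (hat2 v) r.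
  by rewrite /g !mxE sum_hatv_entry.
apply/rowP => k; rewrite [RHS]mxE -[k]enum_valK; apply: (ker_eq0 g_ker) => t.
by rewrite !gE /=; case: (piece_interp t) => <- <- <-; rewrite !subrr.
Qed.

End Span.

Lemma hatv_free (c : V -> R) : \sum_v c v *: hatv v = 0 -> forall v, c v = 0.
Proof.
move=> c0 v; have [t /imsetP [j _ vj]] := Hverts v.
have comp r : \sum_w c w * kervec (hat0 w) (hat1 w) (hat2 w) r = 0.
  by rewrite -sum_hatv_entry c0 mxE.
have := comp (rowX t); have := comp (rowY t); have := comp (rowZ t); rewrite /= => cZ cY cX.
rewrite -(sum_indicator c v) vj.
rewrite (eq_bigr (fun w => c w * hat0 w t + c w * hat1 w t * (P t j).1 + c w * hat2 w t * (P t j).2)).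
  by rewrite !big_split /= -!mulr_suml cX cY cZ !mul0r !addr0.
by move=> w _; rewrite -hat_vertex /aff; ring.
Qed.

Lemma hat_matrix_basis : let B := \matrix_(i < #|V|) hatv (enum_val i) in
  row_free B /\ (B == kermx G)%MS.
Proof.
move=> B; have BE (w : 'rV[R]_#|V|) : w *m B = \sum_v w 0 (enum_rank v) *: hatv v.
  rewrite mulmx_sum_row (reindex enum_rank) /=; last first.
    by exists enum_val => i _; rewrite ?enum_valK ?enum_rankK.
  by apply: eq_bigr => v _; rewrite rowK enum_rankK.
split.
  apply: inj_row_free => w /eqP; rewrite BE => /eqP /hatv_free w0.
  by apply/rowP => k; rewrite -[k]enum_valK w0 mxE.
apply/andP; split.
  by apply/sub_kermxP/row_matrixP => i; rewrite row_mul rowK row0 hatv_ker.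
apply/row_subP => i; apply/submxP.
have row_ker : row i (kermx G) *m G = 0 by rewrite -row_mul mulmx_ker row0.
exists (\row_k nodal_value (row i (kermx G)) (enum_val k)).
rewrite BE [LHS](ker_span row_ker); apply: eq_bigr => v _.
by rewrite mxE enum_rankK.
Qed.

Lemma card_int_bdry_vertices : (#|int_vertices p tv| + #|bdry_vertices p tv|)%N = #|V|.
Proof.
have -> : bdry_vertices p tv = ~: int_vertices p tv.
  apply/setP => v; rewrite !inE; case: (pselect (Omega (p v))) => vO.
    by rewrite (asboolT vO) /=; apply: asboolF => -[].
  rewrite (asboolF vO) /=; apply: asboolT; split => //.
  have [t /imsetP [j _ ->]] := Hverts v.
  by apply: (closed_tri_closure (t := t)); apply/closed_triP => i; rewrite bary_vertex ler0n.
exact: cardsC.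
Qed.

End Mesh.

Unset Implicit Arguments.
Set Strict Implicit.

Theorem proposition5 (R : realType) (V T E : finType) (p : V -> R * R)
  (tv : T -> 'I_3 -> V) (src dst : E -> V)
  (Hrot : same_rotation_sense p tv)
  (Hconf : conforming p tv)
  (Hverts : mesh_vertices tv)
  (Hedges : mesh_edges tv src dst)
  (Hconn : domain_connected p tv)
  (Hpoly : polygonal_boundary p tv src dst)
  (Hone : one_bdry_edge p tv src dst) :
  let G := Gmx p tv src dst in
  \rank (kermx G) = (#|int_vertices p tv| + #|bdry_vertices p tv|)%N /\
  (#|int_vertices p tv| + #|bdry_vertices p tv|)%N = #|V| /\
  exists phi : V -> 'rV[R]_(#|{: RowI tv src dst}|),
    let B := \matrix_(i < #|V|) phi (enum_val i) in
    row_free B /\ (B == kermx G)%MS.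
Proof.
have [sg sg_tri_det] : exists sg : R, forall t, 0 < sg * tri_det p tv t.
  by case: Hrot => H; [exists 1 | exists (-1)] => t; rewrite ?mul1r ?mulN1r ?oppr_gt0.
have tri_det_neq0 t : tri_det p tv t != 0.
  by apply: contraTneq (sg_tri_det t) => ->; rewrite mulr0 ltxx.
have card_V := card_int_bdry_vertices tri_det_neq0 Hverts.
have [B_free B_ker] := hat_matrix_basis tri_det_neq0 sg_tri_det Hconf Hedges Hpoly Hverts.
move=> G; rewrite card_V; split; last by split; last by exists (hatv p tv src dst).
by rewrite -(eqmx_rank B_ker); apply/eqP.
Qed.
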